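(* Let $f$ be either \textsc{OneMinMax} or \textsc{LOTZ}, and let $\mathrm{score}(x,P)$ be a diversity-favouring measure on $\{0,1\}^n\setminus\{0^n,1^n\}$ with respect to $f$. Assume the population $P$ is a subset of the Pareto set, $P\subseteq X^*$. Sort $P$ by non-increasing $\mathrm{score}(x,P)$ and consider a parent selection mechanism based on $\mathrm{score}$ such that $r_i$ is the probability of selecting the $i$-th element of $P$ in this sorted sequence. Then, unless $P$ already covers the Pareto front (i.e. $f(P)=F^*$), the probability of selecting a good individual is at least $\min\{r_1,r_2,r_3\}$.
   Context: Search space $\{0,1\}^n$; objectives maximised. $\textsc{OneMinMax}(x)=(\sum_ix_i,\,n-\sum_ix_i)$; $\textsc{LOTZ}(x)=(\mathrm{LO}(x),\mathrm{TZ}(x))$ with $\mathrm{LO}$ the number of leading ones and $\mathrm{TZ}$ the number of trailing zeros. Dominance: $y$ dominates $x$ if $f_i(y)\ge f_i(x)$ for all $i$, strictly for some $i$. Pareto set $X^*$ (non-dominated points; all of $\{0,1\}^n$ for \textsc{OneMinMax}, $\{1^i0^{n-i}\}$ for \textsc{LOTZ}), Pareto front $F^*=f(X^* )$. Populations contain points with distinct objective vectors. Good: w.r.t. $P$, $x\in P\cap X^*$ is good if some Hamming neighbour $y$ of $x$ satisfies $y\in X^*$ and $f(y)\notin f(P)$; otherwise bad. A measure is diversity-favouring on $S$ (w.r.t. $f$) if for every population $P$ and all $x,y\in P\cap X^*\cap S$ with $x$ bad and $y$ good, $\mathrm{score}(x,P)<\mathrm{score}(y,P)$. *)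

From mathcomp Require Import all_boot all_order all_algebra.
Set Implicit Arguments. Unset Strict Implicit. Unset Printing Implicit Defensive.
Import Order.TTheory GRing.Theory Num.Theory.

Definition bits (n : nat) := n.-tuple bool.

Definition LO (s : seq bool) : nat := find negb s.
Definition TZ (s : seq bool) : nat := find id (rev s).

Inductive problem := OneMinMax | LOTZ.

Definition fobj (pb : problem) (n : nat) (x : bits n) : nat * nat :=
  match pb with
  | OneMinMax => (count id x, n - count id x)
  | LOTZ => (LO x, TZ x)
  end.

Definition dominates (u v : nat * nat) : bool :=
  [&& (v.1 <= u.1)%N, (v.2 <= u.2)%N & ((v.1 < u.1)%N || (v.2 < u.2)%N)].

Definition pareto (pb : problem) (n : nat) (x : bits n) : bool :=
  [forall y : bits n, ~~ dominates (fobj pb y) (fobj pb x)].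

Definition hamming (n : nat) (x y : bits n) : nat :=
  count (fun p => p.1 != p.2) (zip x y).

Definition population (pb : problem) (n : nat) (P : {set bits n}) : Prop :=
  {in P &, injective (fobj pb (n:=n))}.

Definition good (pb : problem) (n : nat) (P : {set bits n}) (x : bits n) : bool :=
  [&& x \in P, pareto pb x &
      [exists y : bits n, [&& hamming x y == 1%N, pareto pb y &
                             [forall z in P, fobj pb z != fobj pb y]]]].

Definition bad (pb : problem) (n : nat) (P : {set bits n}) (x : bits n) : bool :=
  [&& x \in P, pareto pb x & ~~ good pb P x].

Definition non_extreme (n : nat) (x : bits n) : bool :=
  (x != nseq_tuple n false) && (x != nseq_tuple n true).

Definition diversity_favouring (R : realDomainType) (pb : problem) (n : nat)
  (score : bits n -> {set bits n} -> R) : Prop :=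
  forall P : {set bits n}, population pb P ->
  forall x y : bits n,
    x \in P -> pareto pb x -> non_extreme x ->
    y \in P -> pareto pb y -> non_extreme y ->
    bad pb P x -> good pb P y -> (score x P < score y P)%R.

Definition covers_front (pb : problem) (n : nat) (P : {set bits n}) : bool :=
  [forall x : bits n, pareto pb x ==> [exists z in P, fobj pb z == fobj pb x]] &&
  [forall z in P, [exists x : bits n, pareto pb x && (fobj pb x == fobj pb z)]].

From mathcomp Require Import all_boot all_order all_algebra.
From mathcomp Require Import reals.
From mathcomp Require Import zify.
Import Order.TTheory GRing.Theory Num.Theory.

(* On the Pareto set of OneMinMax and of LOTZ the objective vector of an
   individual is (k, n - k) for its level k in [0, n] (number of ones, resp. of
   leading ones), and every level next to k is reached by a single bit flip
   that stays Pareto optimal.  If P does not cover the front, some level g is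
   unoccupied; walking through the occupied levels from any individual of P
   towards g ends at an individual next to an unoccupied level, which is good.
   Started at an interior level (0 < k < n) the walk stays interior, so the good
   individual found is neither 0^n nor 1^n.
   The first three individuals of the sorted population have distinct levels,
   so one of them is interior.  Were all three bad, the diversity-favouring
   score would rank that interior one strictly below a good interior
   individual, which however comes later in the sorted order. *)

Lemma count_neq_zip_set_nth (T : eqType) (s : seq T) x0 i y : i < size s ->
  count (fun p => p.1 != p.2) (zip s (set_nth x0 s i y)) = (nth x0 s i != y).
Proof.
elim: s i => [|a s IH] [|i] //= lt_i; last by rewrite eqxx IH.
by rewrite -[RHS]addn0; congr (_ + _); elim: s {IH lt_i} => //= b s ->; rewrite eqxx.
Qed.

Lemma exists_bits {n} {s : seq bool} : size s = n -> exists x : bits n, x = s :> seq bool.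
Proof. by move=> /eqP sz; exists (Tuple sz). Qed.

Lemma exists_flip {n} (x : bits n) i b : i < n ->
  exists y : bits n, y = set_nth false x i b :> seq bool /\ hamming x y = (nth false x i != b).
Proof.
move=> lt_i; have sz : size (set_nth false x i b) = n.
  by rewrite size_set_nth size_tuple; lia.
have [y ey] := exists_bits sz.
by exists y; rewrite /hamming ey count_neq_zip_set_nth ?size_tuple.
Qed.

Definition stair (i k : nat) : seq bool := nseq i true ++ nseq k false.

Lemma size_stair i k : size (stair i k) = i + k.
Proof. by rewrite size_cat !size_nseq. Qed.

Lemma nth_stair i k j : nth false (stair i k) j = (j < i).
Proof. by rewrite nth_cat size_nseq; case: ltnP => [lt|_]; rewrite nth_nseq ?lt ?if_same. Qed.

Lemma LO_stair i k : LO (stair i k) = i.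
Proof. by rewrite /LO; elim: i => [|i IH] /=; [case: k | rewrite IH]. Qed.

Lemma TZ_stair i k : TZ (stair i k) = k.
Proof. by rewrite /TZ /stair rev_cat !rev_nseq; elim: k => [|k IH] /=; [case: i | rewrite IH]. Qed.

Lemma set_nth_stair_succ i k : set_nth false (stair i k.+1) i true = stair i.+1 k.
Proof.
apply: (@eq_from_nth _ false) => [|j _]; first by rewrite size_set_nth !size_stair; lia.
by rewrite nth_set_nth /= !nth_stair [RHS]ltnS [RHS]leq_eqVlt; case: eqP.
Qed.

Lemma set_nth_stair_pred i k : set_nth false (stair i.+1 k) i false = stair i k.+1.
Proof.
apply: (@eq_from_nth _ false) => [|j _]; first by rewrite size_set_nth !size_stair; lia.
by rewrite nth_set_nth /= !nth_stair ltnS leq_eqVlt; case: eqP => // ->; rewrite ltnn.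
Qed.

Lemma LO_TZ_le (s : seq bool) : LO s + TZ s <= size s.
Proof.
have le_LO : LO s <= size s := find_size _ _.
have le_TZ : TZ s <= size s by rewrite -(size_rev s) find_size.
rewrite leqNgt; apply/negP => lt_s.
have lt_LO : size s - TZ s < LO s by lia.
have lt_TZ : (TZ s).-1 < TZ s by lia.
have := before_find false lt_TZ; rewrite nth_rev; last by lia.
have -> : size s - (TZ s).-1.+1 = size s - TZ s by lia.
by rewrite (negbFE (before_find false lt_LO)).
Qed.

Lemma count_bits_le {n} (x : bits n) : count id x <= n.
Proof. by have := count_size id x; rewrite size_tuple. Qed.

Lemma pareto_OneMinMax {n} (x : bits n) : pareto OneMinMax x.
Proof.
apply/forallP => y; rewrite /dominates /=.
have := count_bits_le x; have := count_bits_le y.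
by move=> ? ?; apply/negP => /and3P [? ? /orP [?|?]]; lia.
Qed.

Lemma LO_TZ_bits_le {n} (x : bits n) : LO x + TZ x <= n.
Proof. by have := LO_TZ_le x; rewrite size_tuple. Qed.

Lemma pareto_LOTZE {n} (x : bits n) : pareto LOTZ x = (x == stair (LO x) (TZ x) :> seq bool).
Proof.
apply/idP/eqP => [/forallP x_opt | ex]; last first.
  apply/forallP => y; rewrite /dominates /=.
  have := LO_TZ_bits_le y; have := congr1 size ex; rewrite size_tuple size_stair => ? ?.
  by apply/negP => /and3P [? ? /orP [?|?]]; lia.
have sum_n : LO x + TZ x = n.
  apply/eqP; rewrite eqn_leq LO_TZ_bits_le leqNgt; apply/negP => lt_n.
  have sz : size (stair (LO x) (n - LO x)) = n by rewrite size_stair; lia.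
  have [y ey] := exists_bits sz.
  have := x_opt y; rewrite /dominates /= ey LO_stair TZ_stair.
  by move/negP; apply; rewrite leqnn ltnn /=; apply/andP; split; lia.
apply: (@eq_from_nth _ false) => [|j]; first by rewrite size_stair size_tuple.
rewrite size_tuple nth_stair => lt_j; case: ltnP => [lt_LO|le_LO].
  exact: negbFE (before_find false lt_LO).
have lt_TZ : n - j.+1 < TZ x by lia.
have := before_find false lt_TZ; rewrite nth_rev ?size_tuple; last by lia.
by have -> : n - (n - j.+1).+1 = j by lia.
Qed.

Lemma LO_TZ_pareto {n} {x : bits n} : pareto LOTZ x -> LO x + TZ x = n.
Proof. by rewrite pareto_LOTZE => /eqP/(congr1 size); rewrite size_tuple size_stair. Qed.

Definition level (pb : problem) {n} (x : bits n) : nat := (fobj pb x).1.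

Lemma level_le {pb n} {x : bits n} : pareto pb x -> level pb x <= n.
Proof. by case: pb => [_|/LO_TZ_pareto]; rewrite /level /=; [apply: count_bits_le | lia]. Qed.

Lemma fobj_pareto {pb n} {x : bits n} : pareto pb x -> fobj pb x = (level pb x, n - level pb x).
Proof. by case: pb => // /LO_TZ_pareto sum_n; rewrite /level /=; congr pair; lia. Qed.

Lemma pareto_level_succ {pb n} {x : bits n} : pareto pb x -> level pb x < n ->
  exists y : bits n, [/\ hamming x y = 1, pareto pb y & level pb y = (level pb x).+1].
Proof.
case: pb => x_opt; rewrite /level /= => lt_n.
- have has0 : has (predC id) x by rewrite has_predC all_count size_tuple neq_ltn lt_n.
  have lt_i : find (predC id) x < n by move: (has0); rewrite has_find size_tuple.
  have x_i := negbTE (nth_find false has0).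
  have [y [ey hxy]] := exists_flip x _ true lt_i.
  exists y; rewrite hxy x_i pareto_OneMinMax ey count_set_nth_ltn ?size_tuple // x_i.
  by split => //; lia.
- have := LO_TZ_pareto x_opt; move: x_opt; rewrite pareto_LOTZE => /eqP.
  move: (LO x) (TZ x) lt_n => l [|k] lt_n ex sum_n; first lia.
  have [y [ey hxy]] := exists_flip x _ true lt_n.
  exists y; rewrite hxy ex nth_stair ltnn pareto_LOTZE ey ex set_nth_stair_succ.
  by rewrite LO_stair TZ_stair.
Qed.

Lemma pareto_level_pred {pb n} {x : bits n} : pareto pb x -> 0 < level pb x ->
  exists y : bits n, [/\ hamming x y = 1, pareto pb y & level pb y = (level pb x).-1].
Proof.
case: pb => x_opt; rewrite /level /= => gt0.
- have has1 : has id x by rewrite has_count.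
  have lt_i : find id x < n by move: (has1); rewrite has_find size_tuple.
  have x_i := nth_find false has1.
  have [y [ey hxy]] := exists_flip x _ false lt_i.
  exists y; rewrite hxy x_i pareto_OneMinMax ey count_set_nth_ltn ?size_tuple // x_i.
  by split => //; lia.
- have := LO_TZ_pareto x_opt; move: x_opt; rewrite pareto_LOTZE => /eqP.
  move: (LO x) (TZ x) gt0 => [|l] k // _ ex sum_n.
  have lt_l : l < n by lia.
  have [y [ey hxy]] := exists_flip x l false lt_l.
  exists y; rewrite hxy ex nth_stair ltnSn pareto_LOTZE ey ex set_nth_stair_pred.
  by rewrite LO_stair TZ_stair.
Qed.

Lemma non_extreme_of_level {pb n} {x : bits n} : 0 < level pb x < n -> non_extreme x.
Proof.
have zeros : nseq n false = stair 0 n by [].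
have ones : nseq n true = stair n 0 by rewrite /stair cats0.
case: pb; rewrite /level /non_extreme /= => lx; apply/andP; split; apply: contraTneq lx => ->;
  by rewrite /= ?count_nseq ?zeros ?ones ?LO_stair ?muln0 ?mul1n ?ltnn ?andbF.
Qed.

Lemma boundary_succ {C : pred nat} {m g : nat} : m < g -> C m -> ~~ C g ->
  exists2 c, m <= c < g & C c && ~~ C c.+1.
Proof.
elim: g => // g IH; rewrite ltnS leq_eqVlt => /orP [/eqP <- | lt_mg] Cm nCg.
  by exists m; [lia | rewrite Cm].
case: (boolP (C g)) => Cg; first by exists g; [lia | rewrite Cg].
by have [c /andP [le_mc lt_cg] Cc] := IH lt_mg Cm Cg; exists c => //; lia.
Qed.

Lemma boundary_pred {C : pred nat} {m g : nat} : g < m -> C m -> ~~ C g ->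
  exists2 c, g < c <= m & C c && ~~ C c.-1.
Proof.
elim: m => // m IH; rewrite ltnS leq_eqVlt => /orP [/eqP -> | lt_gm] CSm nCg.
  by exists m.+1; [lia | rewrite CSm].
case: (boolP (C m)) => Cm; last by exists m.+1; [lia | rewrite CSm].
by have [c /andP [lt_gc le_cm] Cc] := IH lt_gm Cm nCg; exists c => //; lia.
Qed.

Definition has_level pb {n} (P : {set bits n}) k := [exists z in P, level pb z == k].

Section LevelGaps.

Context {pb : problem} {n : nat} {P : {set bits n}}.
Hypothesis P_pareto : forall x, x \in P -> pareto pb x.

Lemma level_inj : population pb P -> {in P &, injective (level pb)}.
Proof.
by move=> popP x y xP yP lxy; apply: popP; rewrite // !fobj_pareto ?P_pareto ?lxy.
Qed.

Lemma exists_level_gap : ~~ covers_front pb P -> exists2 g, g <= n & ~~ has_level pb P g.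
Proof.
rewrite negb_and => /orP [/forallPn [x] | /forallPn [z]]; rewrite negb_imply.
  case/andP => x_opt /existsPn miss; exists (level pb x); first exact: level_le.
  apply/existsP => -[z /andP [zP /eqP lz]]; move: (miss z); rewrite zP /=.
  by rewrite (fobj_pareto (P_pareto _ zP)) (fobj_pareto x_opt) lz eqxx.
by case/andP => zP /existsPn miss; have := miss z; rewrite P_pareto ?eqxx.
Qed.

Lemma good_of_missing_neighbour {z y} : z \in P -> hamming z y = 1 -> pareto pb y ->
  ~~ has_level pb P (level pb y) -> good pb P z.
Proof.
move=> zP hzy y_opt /existsPn miss; rewrite /good zP P_pareto //=.
apply/existsP; exists y; rewrite hzy y_opt; apply/forall_inP => w wP.
by apply: contra (miss w) => /eqP fw; rewrite wP /level fw eqxx.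
Qed.

Lemma exists_good_between {m g} : m \in P -> g <= n -> ~~ has_level pb P g ->
  exists2 z, z \in P &
    good pb P z && ((level pb m <= level pb z < g) || (g < level pb z <= level pb m)).
Proof.
move=> mP le_gn nCg.
have Cm : has_level pb P (level pb m) by apply/existsP; exists m; rewrite mP eqxx.
case: (ltngtP (level pb m) g) => [lt_mg | lt_gm | eq_mg]; last by rewrite -eq_mg Cm in nCg.
- have [c le_mcg /andP [/exists_inP [z zP /eqP lz] nCc]] := boundary_succ lt_mg Cm nCg.
  have [|y [hzy y_opt ly]] := pareto_level_succ (P_pareto _ zP); first lia.
  exists z; rewrite // (good_of_missing_neighbour zP hzy y_opt) ?ly ?lz //; lia.
- have [c le_gcm /andP [/exists_inP [z zP /eqP lz] nCc]] := boundary_pred lt_gm Cm nCg.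
  have [|y [hzy y_opt ly]] := pareto_level_pred (P_pareto _ zP); first lia.
  exists z; rewrite // (good_of_missing_neighbour zP hzy y_opt) ?ly ?lz //; lia.
Qed.

End LevelGaps.

Lemma uniq_has_interior (s : seq nat) n : uniq s -> all (fun k => k <= n) s -> 2 < size s ->
  has (fun k => 0 < k < n) s.
Proof.
move=> s_uniq /allP le_n; apply: contraTT => /hasPn mid; rewrite -leqNgt.
apply: (@uniq_leq_size _ _ [:: 0; n]) s_uniq _ => k ks.
by have := mid k ks; have := le_n k ks; rewrite !inE; lia.
Qed.

Local Open Scope ring_scope.

Section Selection.

Context {R : realDomainType} {pb : problem} {n : nat}.
Context {score : bits n -> {set bits n} -> R} {P : {set bits n}}.
Hypotheses (score_div : diversity_favouring pb score) (popP : population pb P).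
Hypotheses (P_pareto : forall x, x \in P -> pareto pb x) (P_gap : ~~ covers_front pb P).

Lemma bad_interior_outscored {x} : x \in P -> ~~ good pb P x -> (0 < level pb x < n)%N ->
  exists2 z, z \in P & good pb P z && (score x P < score z P).
Proof.
move=> xP x_bad lx; have [g le_gn nCg] := exists_level_gap P_pareto P_gap.
have [z zP /andP [z_good lz]] := exists_good_between P_pareto xP le_gn nCg.
have z_mid : (0 < level pb z < n)%N by lia.
exists z; rewrite // z_good; apply: score_div; rewrite ?P_pareto //.
- exact: non_extreme_of_level lx.
- exact: non_extreme_of_level z_mid.
- by rewrite /bad xP P_pareto.
Qed.

Lemma has_good_take3 {s} : perm_eq s (enum P) -> sorted (fun x y => score y P <= score x P) s ->
  (2 < size s)%N -> has (good pb P) (take 3 s).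
Proof.
move=> s_perm s_sorted s3; apply: contraT => /hasPn none_good.
have take_P x : x \in take 3 s -> x \in P.
  by move/mem_take; rewrite (perm_mem s_perm) mem_enum.
have : has (fun k => 0 < k < n)%N (map (level pb) (take 3 s)).
  apply: uniq_has_interior; last by rewrite size_map size_takel.
    rewrite map_inj_in_uniq; first by rewrite take_uniq // (perm_uniq s_perm) enum_uniq.
    by move=> x y /take_P xP /take_P yP; apply: (level_inj P_pareto popP).
  by apply/allP => _ /mapP [x /take_P xP ->]; apply: level_le; apply: P_pareto.
rewrite has_map => /hasP [x xt lx].
have [z zP /andP [z_good lt_xz]] := bad_interior_outscored (take_P x xt) (none_good x xt) lx.
have zd : z \in drop 3 s.
  move: zP; rewrite -mem_enum -(perm_mem s_perm) -{1}(cat_take_drop 3 s) mem_cat.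
  by case/orP => // /none_good; rewrite z_good.
have ge_trans : transitive (fun x y => score y P <= score x P).
  by move=> ? ? ? le1 le2; apply: le_trans le2 le1.
move: s_sorted; rewrite sorted_pairwise // -(cat_take_drop 3 s) pairwise_cat.
case/and3P => /allrelP ge_take_drop _ _.
by have := lt_le_trans lt_xz (ge_take_drop x z xt zd); rewrite ltxx.
Qed.

End Selection.

Section ZipSum.

Context {R : numDomainType} {T : eqType} {a : pred T} {s : seq T} {r : seq R}.
Hypotheses (size_r : size r = size s) (r_ge0 : all (fun w => 0 <= w) r).

Lemma sum_zip_ge0 : 0 <= \sum_(q <- zip s r | a q.1) q.2.
Proof.
rewrite big_seq_cond; apply: sumr_ge0 => q /andP [qsr _]; apply: (allP r_ge0).
by rewrite -(unzip2_zip (eq_leq size_r)) map_f.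
Qed.

Lemma nth_le_sum_zip {x0 : T} {k : nat} : (k < size s)%N -> a (nth x0 s k) ->
  r`_k <= \sum_(q <- zip s r | a q.1) q.2.
Proof.
move=> lt_k ak; rewrite (big_nth (x0, 0)) size_zip size_r minnn big_mkord.
rewrite (bigD1 (Ordinal lt_k)) /= ?nth_zip // lerDl sumr_ge0 // => i _.
by rewrite nth_zip //=; apply: (all_nthP 0 r_ge0); rewrite size_r.
Qed.

End ZipSum.

Theorem lemma3 (R : realType) (n : nat) (pb : problem)
  (score : bits n -> {set bits n} -> R)
  (Hdiv : diversity_favouring pb score)
  (P : {set bits n}) (HP : population pb P)
  (HPX : forall x, x \in P -> pareto pb x)
  (s : seq (bits n)) (Hperm : perm_eq s (enum P))
  (Hsort : sorted (fun x y => score y P <= score x P) s)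
  (r : seq R) (Hsize : size r = size s)
  (Hr0 : all (fun p => 0 <= p) r) (Hr1 : \sum_(p <- r) p = 1)
  (Hcov : ~~ covers_front pb P) :
  Num.min r`_0 (Num.min r`_1 r`_2) <= \sum_(q <- zip s r | good pb P q.1) q.2.
Proof.
have min_le k : (k < 3)%N -> Num.min r`_0 (Num.min r`_1 r`_2) <= r`_k.
  by case: k => [|[|[|]]] // _; rewrite ?ge_min ?lexx ?orbT.
have [small | big] := ltnP (size s) 3.
  (* [r`_2] is then the default 0, which is why the normalisation [Hr1] is not needed. *)
  apply: le_trans (min_le 2%N isT) _; rewrite nth_default ?Hsize //.
  exact: sum_zip_ge0 Hsize Hr0.
have /(has_nthP (nseq_tuple n false)) [k] := has_good_take3 Hdiv HP HPX Hcov Hperm Hsort big.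
rewrite size_takel // => lt_k3; rewrite nth_take // => k_good.
have lt_ks : (k < size s)%N := leq_trans lt_k3 big.
exact: le_trans (min_le k lt_k3) (nth_le_sum_zip Hsize Hr0 lt_ks k_good).
Qed.
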